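(* Let $0<\delta\le1$ and let $s\in\{0,1\}^k$ have i.i.d. $\mathrm{Bernoulli}(p)$ entries with $p\le\frac{1-\delta}2$, placed on the nodes of a complete $B$-ary tree of depth $D$ (so $k=\sum_{j=0}^{D-1}B^j$). Apply the distillation gadget $U$ to $|s\rangle$, measure all qubits except the root in the computational basis, and run the decoding algorithm. If $B=\Omega(\delta^{-2})$, then the probability that the decoder's output $\tilde s_{root}$ differs from $s_{root}$ is at most $2^{-B^{\Omega(D)}}$.
   Context: Layers of the tree are $L_1$ (leaves), $L_2,\dots,L_D$ (root); $N_u$ denotes the children of node $u$. Distillation gadget $U$: for $i=2,3,\dots,D$ in this order (leaves to root), for each parent $u\in L_i$ and each child $c\in N_u$, apply $\mathsf{CNOT}$ with control $u$ and target $c$. Decoding algorithm, given measured bits $b_u$ for all non-root nodes: set $\tilde b_u=b_u$ for $u\in L_1$; for $i=2,\dots,D$ and each $u\in L_i$, set $\tilde s_u=\mathrm{Maj}(\tilde b_c:c\in N_u)$ (majority), and if $u$ is not the root set $\tilde b_u=\tilde s_u\oplus b_u$; output $\tilde s_{root}$. *)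

From HB Require Import structures.
From mathcomp Require Import all_boot all_order all_algebra.
From mathcomp Require Import reals exp Rstruct.
Set Implicit Arguments. Unset Strict Implicit. Unset Printing Implicit Defensive.
Import Order.TTheory GRing.Theory Num.Theory.

(* Nodes of the complete B-ary tree of depth D: a node is the path from the
   root (a sequence of child indices in 'I_B) of length n < D.
   Root: n = 0 (layer L_D). Leaves: n = D-1 (layer L_1). *)
Definition node_fam (D B : nat) (n : 'I_D) : finType := (n : nat).-tuple 'I_B.
Definition node (D B : nat) := {n : 'I_D & node_fam B n}.
HB.instance Definition _ (D B : nat) := Finite.on (node D B).

Section Tree.
Variables D B : nat.

Definition depth (u : node D B) : nat := val (tag u).
Definition path_of (u : node D B) : seq 'I_B := tval (tagged u).

Definition child (u c : node D B) : bool :=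
  (depth c == (depth u).+1) && (take (depth u) (path_of c) == path_of u).

Definition layer (u : node D B) : nat := D - depth u.

Definition assignment := {ffun node D B -> bool}.

Definition cnot (u c : node D B) (x : assignment) : assignment :=
  [ffun v => if v == c then xorb (x v) (x u) else x v].

Definition gadget_gates : seq (node D B * node D B) :=
  flatten [seq [seq (u, c) | u <- [seq u <- enum {: node D B} | layer u == i],
                             c <- [seq c <- enum {: node D B} | child u c]]
          | i <- iota 2 D.-1].

(* Distillation gadget U acting on the basis state |s> (a permutation of
   basis states, so U|s> = |gadget s>). *)
Definition gadget (s : assignment) : assignment :=
  foldl (fun x g => cnot g.1 g.2 x) s gadget_gates.

Definition maj (l : seq bool) : bool := (size l < (count id l).*2)%N.

(* Decoder, given measured bits b (the value of b at the root is ignored).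
   bt m u = \tilde b_u for a node u of height m (height = D-1-depth);
   st m u = \tilde s_u computed from children of height m. *)
Fixpoint bt (b : assignment) (m : nat) (u : node D B) : bool :=
  match m with
  | 0 => b u
  | m'.+1 => xorb (maj [seq bt b m' c | c <- enum {: node D B} & child u c]) (b u)
  end.

Definition st (b : assignment) (m : nat) (u : node D B) : bool :=
  maj [seq bt b m c | c <- enum {: node D B} & child u c].

(* Decoder output \tilde s_root = st (D-2) root; the decoding fails on
   input s if it differs from s_root. Measuring the basis state U|s> in the
   computational basis yields b_u = (gadget s) u with certainty. *)
Definition decoding_error (s : assignment) : bool :=
  [exists u : node D B,
     (depth u == 0%N) && (st (gadget s) (D - 2) u != s u)].

Definition bernoulli_prob (p : Rdefinitions.R) (E : pred assignment) : Rdefinitions.R :=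
  (\sum_(s : assignment | E s) \prod_(u : node D B) (if s u then p else 1 - p))%R.

Definition error_prob (p : Rdefinitions.R) : Rdefinitions.R := bernoulli_prob p decoding_error.

End Tree.

From mathcomp Require Import all_boot all_order all_algebra.
From mathcomp Require Import reals exp Rstruct.
From mathcomp Require Import zify ring lra.
Import Order.TTheory GRing.Theory Num.Theory.
Set Implicit Arguments. Unset Strict Implicit. Unset Printing Implicit Defensive.

(* The gadget XORs every parent into its children, layer by layer from the
   leaves up, so the measured bit of a non-root node [c] with parent [u] is
   [s_c (+) s_u]. Relative to [s_u], the decoder's estimate [b~_c] is therefore
   wrong only if [s_c = 1] (leaves) or if at least half of the children of [c]
   are wrong: decoding errors are dominated by a weak-majority recursion on the
   i.i.d. bits [s] themselves. A Chernoff bound with tilt [1 + delta] makes a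
   node just above the leaves faulty with probability at most [2^-8] once
   [B delta^2 >= 1024]; higher up, faulty subtrees are independent, and a union
   bound over the at most [2^B] majority sets of children raises the bound to
   the power [t = B/8] per level. The root thus fails with probability at most
   [2^(-8 t^(D-2))], and [t^2 >= B]. *)

Section Tree.
Variables D B : nat.
Notation node := (node D B).
Notation assignment := (assignment D B).
Implicit Types (u v c d : node) (s x : assignment).

Lemma depth_lt u : (depth u < D)%N.
Proof. by rewrite /depth; case: (tag u). Qed.

Lemma size_path_of u : size (path_of u) = depth u.
Proof. exact: size_tuple. Qed.

Lemma node_inj u v : depth u = depth v -> path_of u = path_of v -> u = v.
Proof.
case: u => n t; case: v => n' t'; rewrite /depth /path_of /= => /val_inj Enn'.
by subst n' => /val_inj ->.
Qed.

Lemma depth0_inj u v : depth u = 0%N -> depth v = 0%N -> u = v.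
Proof.
have path_nil (w : node) : depth w = 0%N -> path_of w = [::].
  by move=> w0; apply: size0nil; rewrite size_path_of.
by move=> u0 v0; apply: node_inj; rewrite ?path_nil ?u0 ?v0.
Qed.

Lemma child_depth u c : child u c -> depth c = (depth u).+1.
Proof. by case/andP => /eqP. Qed.

Lemma child_path u c : child u c -> take (depth u) (path_of c) = path_of u.
Proof. by case/andP => _ /eqP. Qed.

Lemma child_parent_uniq u u' c : child u c -> child u' c -> u = u'.
Proof.
move=> Huc Hu'c; have Edepth : depth u = depth u'.
  by apply: succn_inj; rewrite -(child_depth Huc) -(child_depth Hu'c).
by apply: node_inj; rewrite // -(child_path Huc) -(child_path Hu'c) Edepth.
Qed.

Lemma layer_child u c : child u c -> layer u = (layer c).+1.
Proof. by move=> Huc; have := depth_lt c; rewrite /layer (child_depth Huc); lia. Qed.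

Lemma layer_gt0 v : (0 < layer v)%N.
Proof. by rewrite /layer subn_gt0 depth_lt. Qed.

Lemma layer_leD v : (layer v <= D)%N.
Proof. exact: leq_subr. Qed.

Lemma xorbE (x y : bool) : xorb x y = x (+) y.
Proof. by case: x; case: y. Qed.

Definition apply_cnots (l : seq (node * node)) x : assignment :=
  foldl (fun x g => cnot g.1 g.2 x) x l.

Lemma apply_cnots_disjoint l x :
  {in l &, forall g g', g.1 != g'.2} ->
  forall v, apply_cnots l x v = x v (+) \big[addb/false]_(g <- l | g.2 == v) x g.1.
Proof.
elim: l x => [|g l IH] x Hl v; first by rewrite big_nil addbF.
have Hl' : {in l &, forall g g', g.1 != g'.2}.
  by move=> g1 g2 Hg1 Hg2; apply: Hl; rewrite inE ?Hg1 ?Hg2 orbT.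
rewrite /apply_cnots /= -/(apply_cnots _ _) IH // big_cons.
have controls_fixed : {in l, forall g', cnot g.1 g.2 x g'.1 = x g'.1}.
  move=> g' Hg'; rewrite ffunE; case: eqP => // Eg'.
  by move: (Hl g' g); rewrite inE Hg' orbT mem_head Eg' eqxx => /(_ isT isT).
rewrite big_seq_cond (eq_bigr (fun g' => x g'.1)) -?big_seq_cond; last first.
  by move=> g' /andP[/controls_fixed].
rewrite ffunE eq_sym; case: eqP => // _.
by case: (x v); case: (x g.1); case: (\big[_/_]_(_ <- l | _) _).
Qed.

Definition layer_gates (i : nat) : seq (node * node) :=
  [seq (u, c) | u <- [seq u <- enum {: node} | layer u == i],
                c <- [seq c <- enum {: node} | child u c]].

Lemma gadget_gatesE : gadget_gates D B = flatten [seq layer_gates i | i <- iota 2 D.-1].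
Proof. by []. Qed.

Lemma layer_gates_disjoint i : {in layer_gates i &, forall g g', g.1 != g'.2}.
Proof.
move=> _ _ /allpairsPdep[u [c [Hu _ ->]]] /allpairsPdep[u' [c' [Hu' Hc' ->]]] /=.
move: Hu Hu' Hc'; rewrite !mem_filter => /andP[/eqP Lu _] /andP[/eqP Lu' _] /andP[Hu'c' _].
by apply/eqP => Euc'; move: (layer_child Hu'c'); rewrite -Euc' Lu Lu'; lia.
Qed.

Lemma sum_layer_gates i x v :
  \big[addb/false]_(g <- layer_gates i | g.2 == v) x g.1 =
  \big[addb/false]_(u | (layer u == i) && child u v) x u.
Proof.
rewrite big_mkcond /layer_gates big_allpairs_dep /= big_filter big_enum_cond /=.
rewrite big_mkcond [RHS]big_mkcond; apply: eq_bigr => u _; case: (layer u == i) => //=.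
rewrite big_filter big_enum_cond /= -big_mkcondr /=.
case Huv: (child u v).
  by rewrite (big_pred1 v) // => c; apply/andP/eqP => [[_ /eqP]|->]; rewrite ?eqxx.
by rewrite big1 // => c /andP[Huc /eqP Ec]; move: Huv; rewrite -Ec Huc.
Qed.

Lemma apply_layer_gates i x v :
  apply_cnots (layer_gates i) x v =
  x v (+) \big[addb/false]_(u | (layer u == i) && child u v) x u.
Proof. by rewrite apply_cnots_disjoint ?sum_layer_gates //; exact: layer_gates_disjoint. Qed.

(* A control in layer [L_i] is a target only in the later round [L_(i+1)],
   so it still carries its input bit when its own gates are applied. *)
Lemma apply_gadget_prefix s j v :
  apply_cnots (flatten [seq layer_gates i | i <- iota 2 j]) s v =
  s v (+) \big[addb/false]_(u | child u v && (layer u <= j.+1)%N) s u.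
Proof.
elim: j v => [|j IH] v.
  by rewrite big1 ?addbF // => u /andP[/layer_child ->]; rewrite ltnS leqNgt layer_gt0.
have -> : iota 2 j.+1 = iota 2 j ++ [:: j.+2] by rewrite -[j.+1]addn1 iotaD addn1 add2n.
rewrite map_cat flatten_cat /apply_cnots foldl_cat -!/(apply_cnots _ _) /= cats0.
rewrite apply_layer_gates IH -addbA; congr (_ (+) _).
rewrite [RHS](bigID (fun u => layer u == j.+2)) /= [LHS]addbC; congr (_ (+) _).
  apply: eq_big => [u|u /andP[/eqP Lu _]].
    by rewrite andbC; case: eqP => [->|]; rewrite ?leqnn ?andbT ?andbF.
  rewrite IH big1 ?addbF // => w /andP[/layer_child]; rewrite Lu; lia.
apply: eq_bigl => u; rewrite -andbA; congr (_ && _).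
by apply/idP/andP => [|[]]; lia.
Qed.

Lemma gadget_child s u v : child u v -> gadget s v = s v (+) s u.
Proof.
move=> Huv; rewrite /gadget -/(apply_cnots _ s) gadget_gatesE apply_gadget_prefix.
rewrite (big_pred1 u) // => w; apply/andP/eqP => [[Hwv _]|->].
  exact: child_parent_uniq Hwv Huv.
by rewrite Huv; have := layer_leD u; have := layer_gt0 u; lia.
Qed.

Definition wmaj (l : seq bool) : bool := (size l <= (count id l).*2)%N.

Lemma maj_addb_wmaj (l : seq bool) (y : bool) : maj [seq z (+) y | z <- l] (+) y -> wmaj l.
Proof.
rewrite /maj /wmaj size_map count_map; case: y => /=; last first.
  by rewrite addbF (eq_count (a2 := id)) => [/ltnW|z /=]; rewrite ?addbF.
rewrite addbT (eq_count (a2 := predC id)) => [|z /=]; last by rewrite addbT.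
by have := count_predC id l; lia.
Qed.

Lemma wmaj_map_mono (T : eqType) (l : seq T) (e w : pred T) :
  {in l, forall t, e t -> w t} -> wmaj (map e l) -> wmaj (map w l).
Proof.
move=> ew; rewrite /wmaj !size_map !count_map => /leq_trans; apply.
rewrite leq_double -(eq_in_count (a1 := predI (mem l) e)) => [|t tl]; last by rewrite /= tl.
by apply: sub_count => t /andP[/ew]; apply.
Qed.

Definition children u : seq node := [seq c <- enum {: node} | child u c].

Fixpoint faulty s (m : nat) u : bool :=
  if m is m'.+1 then wmaj [seq faulty s m' c | c <- children u] else s u.

Definition descendant c v : bool :=
  (depth c <= depth v)%N && (take (depth c) (path_of v) == path_of c).

Lemma descendant_child c d : child c d -> descendant c d.
Proof. by move=> Hcd; rewrite /descendant (child_depth Hcd) leqnSn (child_path Hcd) /=. Qed.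

Lemma descendant_trans_child c d v : child c d -> descendant d v -> descendant c v.
Proof.
move=> Hcd /andP[Hdv /eqP Pdv]; rewrite /descendant (child_depth Hcd) in Hdv *.
by rewrite (leq_trans (leqnSn _) Hdv) -(child_path Hcd) -Pdv take_takel ?eqxx ?(child_depth Hcd).
Qed.

Lemma descendant_children_disjoint c d d' v :
  child c d -> child c d' -> descendant d v -> descendant d' v -> d = d'.
Proof.
move=> Hcd Hcd' /andP[_ /eqP Pdv] /andP[_ /eqP Pd'v].
have Edepth : depth d = depth d' by rewrite (child_depth Hcd) (child_depth Hcd').
by apply: node_inj; rewrite // -Pdv -Pd'v Edepth.
Qed.

Lemma mem_children c d : (d \in children c) = child c d.
Proof. by rewrite mem_filter mem_enum andbT. Qed.

Lemma uniq_children c : uniq (children c).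
Proof. by rewrite filter_uniq ?enum_uniq. Qed.

Lemma card_children_count c (P : pred node) :
  #|[set d in children c | P d]| = count P (children c).
Proof.
rewrite -size_filter -(elimT card_uniqP (filter_uniq _ (uniq_children c))).
by apply: eq_card => d; rewrite !inE !mem_filter [LHS]andbC.
Qed.

Lemma size_children c : ((depth c).+1 < D)%N -> (B <= size (children c))%N.
Proof.
move=> Hlt; pose f i : node := existT _ (Ordinal Hlt) (rcons_tuple (tagged c) i).
have f_path i : path_of (f i) = rcons (path_of c) i by [].
have f_inj : injective f.
  by move=> i j /(congr1 (@path_of D B)); rewrite !f_path; apply: rcons_injr.
rewrite -(elimT card_uniqP (uniq_children c)) -{1}(card_ord B) -(card_imset _ f_inj).
apply: subset_leq_card; apply/subsetP => _ /imsetP[i _ ->].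
rewrite mem_children /child f_path eqxx.
by rewrite -cats1 take_size_cat ?size_path_of ?eqxx.
Qed.

Section Decoder.
Variable s : assignment.
Let b := gadget s.

Lemma st_addb_faulty m v :
  {in children v, forall c, bt b m c (+) s v -> faulty s m c} ->
  st b m v (+) s v -> faulty s m.+1 v.
Proof.
move=> Hc Hst; apply: (wmaj_map_mono Hc); apply: (maj_addb_wmaj (y := s v)).
rewrite -map_comp (eq_map (g := bt b m)) // => c /=; exact: addbK.
Qed.

Lemma bt_addb_faulty m u c : child u c -> bt b m c (+) s u -> faulty s m c.
Proof.
elim: m u c => [|m IH] u c Huc; rewrite /= /b (gadget_child s Huc).
  by rewrite -addbA addbb addbF.
rewrite -/b -/(st b m c) xorbE !addbA addbK; apply: st_addb_faulty => d.
by rewrite mem_children => /IH.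
Qed.

Lemma decoding_error_faulty :
  decoding_error s -> exists2 u, depth u = 0%N & faulty s (D - 2).+1 u.
Proof.
case/existsP => u /andP[/eqP u_root Hu]; exists u => //.
apply: st_addb_faulty; last by move: Hu; case: (st _ _ _); case: (s u).
by move=> c; rewrite mem_children => Huc; apply: bt_addb_faulty Huc.
Qed.

End Decoder.

End Tree.

Local Open Scope ring_scope.
Local Notation R := Rdefinitions.R.

Section Bernoulli.
Variables (I : finType) (p : R).
Hypotheses (p_ge0 : 0 <= p) (p_le1 : p <= 1).
Implicit Types (s : {ffun I -> bool}) (F G H : {ffun I -> bool} -> R) (A : pred I).

Definition weight s : R := \prod_i (if s i then p else 1 - p).

Definition expect F : R := \sum_s F s * weight s.

Lemma weight_ge0 s : 0 <= weight s.
Proof. by apply: prodr_ge0 => i _; case: ifP; rewrite ?subr_ge0. Qed.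

Lemma ler_expect F G : (forall s, F s <= G s) -> expect F <= expect G.
Proof. by move=> FG; apply: ler_sum => s _; rewrite ler_wpM2r ?weight_ge0. Qed.

Lemma expect_ge0 F : (forall s, 0 <= F s) -> 0 <= expect F.
Proof. by move=> F0; apply: sumr_ge0 => s _; rewrite mulr_ge0 ?weight_ge0. Qed.

Lemma expect1 : expect (fun _ => 1) = 1.
Proof.
rewrite /expect /weight; under eq_bigr do rewrite mul1r.
rewrite -(bigA_distr_bigA (fun i (x : bool) => if x then p else 1 - p)).
by rewrite big1 // => i _; rewrite big_bool /= subrKC.
Qed.

Lemma expect_sumr (J : finType) (P : pred J) (G : J -> {ffun I -> bool} -> R) H :
  expect (fun s => H s * \sum_(j | P j) G j s) = \sum_(j | P j) expect (fun s => H s * G j s).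
Proof.
rewrite /expect (eq_bigr (fun s => \sum_(j | P j) H s * G j s * weight s)).
  by rewrite exchange_big.
by move=> s _; rewrite mulr_sumr mulr_suml.
Qed.

Definition flip i s : {ffun I -> bool} := [ffun j => if j == i then ~~ s j else s j].

Lemma flipK i : involutive (flip i).
Proof. by move=> s; apply/ffunP => j; rewrite !ffunE; case: eqP; rewrite ?negbK. Qed.

Lemma flip_id i s : flip i s i = ~~ s i.
Proof. by rewrite ffunE eqxx. Qed.

(* Pair [s] with [flip i s]: on each pair [H] is constant and [s i] takes both values. *)
Lemma expect_coord i (g : bool -> R) H :
  (forall s, H (flip i s) = H s) ->
  expect (fun s => H s * g (s i)) = expect H * (p * g true + (1 - p) * g false).
Proof.
move=> Hflip.
pose w (x : bool) : R := if x then p else 1 - p.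
pose K s := H s * \prod_(j | j != i) w (s j).
have weightE s : weight s = w (s i) * \prod_(j | j != i) w (s j) by rewrite /weight (bigD1 i).
have Kflip s : K (flip i s) = K s.
  by rewrite /K Hflip; congr (_ * _); apply: eq_bigr => j /negPf ji; rewrite ffunE ji.
have sum_split (f : bool -> R) :
    \sum_(s : {ffun I -> bool}) K s * f (s i) = (f true + f false) * \sum_(s : {ffun I -> bool} | s i) K s.
  rewrite (bigID (fun s => s i)) /= mulrDl !mulr_sumr; congr (_ + _).
    by apply: eq_bigr => s ->; rewrite mulrC.
  rewrite (reindex_inj (can_inj (flipK i))) /=.
  apply: eq_big => [s|s]; first by rewrite flip_id negbK.
  by rewrite Kflip flip_id => /negbNE ->; rewrite mulrC.
have -> : expect (fun s => H s * g (s i)) = \sum_(s : {ffun I -> bool}) K s * (g (s i) * w (s i)).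
  by apply: eq_bigr => s _; rewrite weightE /K; ring.
have -> : expect H = \sum_(s : {ffun I -> bool}) K s * w (s i).
  by apply: eq_bigr => s _; rewrite weightE /K; ring.
by rewrite (sum_split (fun x => g x * w x)) (sum_split w) /w; ring.
Qed.

Definition depends_on F A := forall s s', {in A, s =1 s'} -> F s = F s'.

Lemma depends_on_sub F A A' : {subset A <= A'} -> depends_on F A -> depends_on F A'.
Proof. by move=> AA' FA s s' ss'; apply: FA => i /AA'; apply: ss'. Qed.

Lemma depends_on_prod (J : eqType) (r : seq J) (F : J -> {ffun I -> bool} -> R) A :
  {in r, forall j, depends_on (F j) A} -> depends_on (fun s => \prod_(j <- r) F j s) A.
Proof. by move=> FA s s' ss'; rewrite !big_seq; apply: eq_bigr => j /FA; apply. Qed.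

(* [F] has conditional mean at most [q] given the coordinates outside [A]. *)
Definition mean_bound F A q := forall H, (forall s, 0 <= H s) ->
  depends_on H (predC A) -> expect (fun s => H s * F s) <= expect H * q.

Lemma mean_bound_weaken F A A' q q' :
  {subset A <= A'} -> q <= q' -> mean_bound F A q -> mean_bound F A' q'.
Proof.
move=> AA' qq' FA H H0 HA'; apply: le_trans (FA H H0 _) _.
  by apply: depends_on_sub HA' => i; apply: contra; apply: AA'.
by rewrite ler_wpM2l ?expect_ge0.
Qed.

Lemma mean_bound_expect F A q : mean_bound F A q -> expect F <= q.
Proof.
move=> FA; have := FA (fun _ => 1) (fun _ => ler01) (fun _ _ _ => erefl).
rewrite expect1 mul1r; apply: le_trans; by apply: ler_expect => s; rewrite mul1r.
Qed.

Lemma mean_bound_sum (J : finType) (P : pred J) (F : J -> {ffun I -> bool} -> R) A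
    (q : J -> R) :
  (forall j, P j -> mean_bound (F j) A (q j)) ->
  mean_bound (fun s => \sum_(j | P j) F j s) A (\sum_(j | P j) q j).
Proof.
move=> Fq H H0 HA; rewrite expect_sumr mulr_sumr.
by apply: ler_sum => j Pj; apply: Fq.
Qed.

Lemma mean_bound_coord i (g : bool -> R) :
  mean_bound (fun s => g (s i)) (pred1 i) (p * g true + (1 - p) * g false).
Proof.
move=> H _ Hi; rewrite expect_coord // => s; apply: Hi => j.
by rewrite !inE ffunE => /negPf ->.
Qed.

Lemma mean_bound_prod (J : eqType) (r : seq J) (F : J -> {ffun I -> bool} -> R)
    (A : J -> pred I) q :
  0 <= q -> uniq r -> (forall j s, 0 <= F j s) ->
  (forall j, depends_on (F j) (A j)) ->
  {in r &, forall j j' i, A j i -> A j' i -> j = j'} ->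
  {in r, forall j, mean_bound (F j) (A j) q} ->
  mean_bound (fun s => \prod_(j <- r) F j s) [pred i | has (A^~ i) r] (q ^+ size r).
Proof.
move=> q0; elim: r => [|j r IH] /= r_uniq F0 FA Adisj Fq H H0 HA.
  by rewrite expr0 mulr1; apply: ler_expect => s; rewrite big_nil mulr1.
case/andP: r_uniq => jr r_uniq.
have sub_r : {subset r <= j :: r} by move=> k kr; rewrite inE kr orbT.
have -> : expect (fun s => H s * \prod_(k <- j :: r) F k s) =
          expect (fun s => H s * \prod_(k <- r) F k s * F j s).
  by apply: eq_bigr => s _; rewrite big_cons [F j s * _]mulrC mulrA.
rewrite exprS mulrCA; apply: le_trans (Fq j (mem_head _ _) _ _ _) _.
- by move=> s; rewrite mulr_ge0 // prodr_ge0.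
- move=> s s' ss'; congr (_ * _).
    by apply: HA => i; rewrite !inE negb_or => /andP[nAji _]; apply: ss'.
  apply: depends_on_prod ss' => k kr; apply: depends_on_sub (FA k) => i Aki.
  rewrite inE; apply/negP => Aji; move: jr.
  by rewrite -(Adisj k j (sub_r _ kr) (mem_head _ _) i Aki Aji) kr.
rewrite mulrC ler_wpM2l //; apply: IH => //.
- by move=> k k' /sub_r kr /sub_r k'r; apply: Adisj.
- by move=> k /sub_r; apply: Fq.
- by apply: depends_on_sub HA => i; rewrite !inE negb_or => /andP[].
Qed.

End Bernoulli.

Lemma sum_large_subsets (T : finType) (X : {set T}) (q : R) : 0 <= q <= 1 ->
  \sum_(S in powerset X | (#|X| <= #|S|.*2)%N) q ^+ #|S| <= 2 ^+ #|X| * q ^+ #|X|./2.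
Proof.
case/andP=> q_ge0 q_le1; rewrite big_mkcondr /=.
apply: le_trans (_ : \sum_(S in powerset X) q ^+ #|X|./2 <= _).
  apply: ler_sum => S _; case: ifP => [large|_]; last exact: exprn_ge0.
  by rewrite ler_wiXn2l // -(doubleK #|S|) half_leq.
by rewrite sumr_const card_powerset -[_ *+ 2 ^ _]mulr_natl natrX.
Qed.

Section FaultyBound.
Variables (D B : nat) (p : R).
Hypotheses (p_ge0 : 0 <= p) (p_le1 : p <= 1).
Notation node := (node D B).
Notation assignment := (assignment D B).
Notation expect := (expect p).
Notation mean_bound := (mean_bound p).
Implicit Types (u v c d : node) (s : assignment).

Variable a : R.
Hypothesis a_ge1 : 1 <= a.

Definition tilt (x : bool) : R := if x then a else a^-1.

Lemma tilt_ge0 x : 0 <= tilt x.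
Proof. by rewrite /tilt; case: x; rewrite ?invr_ge0 (le_trans ler01). Qed.

Lemma prod_tilt (l : seq bool) :
  \prod_(x <- l) tilt x = a ^+ count id l / a ^+ count negb l.
Proof.
elim: l => [|x l IH]; first by rewrite big_nil divr1.
rewrite big_cons IH; case: x => /=; rewrite ?add0n ?add1n exprS; first by rewrite mulrA.
by rewrite invfM mulrCA.
Qed.

Lemma prod_tilt_ge1 (l : seq bool) : wmaj l -> 1 <= \prod_(x <- l) tilt x.
Proof.
rewrite /wmaj prod_tilt => Hl; have a_gt0 : 0 < a := lt_le_trans ltr01 a_ge1.
rewrite ler_pdivlMr ?exprn_gt0 // mul1r ler_weXn2l //.
by have := count_predC id l; change (count (predC id) l) with (count negb l); lia.
Qed.

(* A majorant of the indicator of [faulty s m.+1 c]: a Chernoff bound at the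
   lowest level, a union bound over majority sets of children above. Its
   products range over disjoint subtrees, hence factorise in expectation. *)
Fixpoint faulty_bound (m : nat) c s : R :=
  if m is m'.+1 then
    \sum_(T in powerset [set d in children c] | (size (children c) <= (#|T|).*2)%N)
      \prod_(d <- enum T) faulty_bound m' d s
  else \prod_(d <- children c) tilt (s d).

Lemma faulty_bound_ge0 m c s : 0 <= faulty_bound m c s.
Proof.
elim: m c => [|m IH] c /=; first by apply: prodr_ge0 => d _; apply: tilt_ge0.
by apply: sumr_ge0 => T _; apply: prodr_ge0.
Qed.

Lemma faulty_bound_ge1 m c s : faulty s m.+1 c -> 1 <= faulty_bound m c s.
Proof.
elim: m c => [|m IH] c; first by move=> /prod_tilt_ge1; rewrite big_map.
rewrite /= /wmaj size_map count_map => Hc.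
set T0 := [set d in children c | faulty s m.+1 d].
have T0_sub : T0 \in powerset [set d in children c].
  by rewrite powersetE; apply/subsetP => d; rewrite !inE => /andP[].
rewrite (bigD1 T0) /=; last by rewrite T0_sub card_children_count.
apply: le_trans (_ : 1 <= \prod_(d <- enum T0) faulty_bound m d s) _.
  rewrite big_seq; apply: (big_ind (fun x => 1 <= x)) => [|x y|d]; first exact: lexx.
    exact: mulr_ege1.
  by rewrite mem_enum inE => /andP[_ /IH].
by rewrite lerDl; apply: sumr_ge0 => T _; apply: prodr_ge0 => d _; apply: faulty_bound_ge0.
Qed.

Lemma faulty_bound_depends m c : depends_on (faulty_bound m c) (descendant c).
Proof.
elim: m c => [|m IH] c s s' ss' /=.
  rewrite !big_seq; apply: eq_bigr => d; rewrite mem_children => Hcd.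
  by rewrite ss' //; apply: descendant_child.
apply: eq_bigr => T /andP[HT _]; rewrite !big_seq; apply: eq_bigr => d.
rewrite mem_enum => Hd; apply: IH => v Hv; apply: ss'.
apply: descendant_trans_child Hv; move: HT; rewrite powersetE => /subsetP/(_ d Hd).
by rewrite inE mem_children.
Qed.

Lemma error_prob_le_faulty_bound r : depth r = 0%N -> (2 <= D)%N ->
  error_prob D B p <= expect (faulty_bound (D - 2) r).
Proof.
move=> r_root D_ge2; rewrite /error_prob /bernoulli_prob big_mkcond.
apply: ler_sum => s _; case: ifP => [err|_]; last first.
  by rewrite mulr_ge0 ?faulty_bound_ge0 ?weight_ge0.
rewrite -[X in X <= _]mul1r ler_wpM2r ?weight_ge0 //.
have [u u_root faulty_u] := decoding_error_faulty err.
by rewrite -(depth0_inj u_root r_root); apply: faulty_bound_ge1.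
Qed.

Section LevelBound.
Variable t : nat.
Hypotheses (t_gt0 : (0 < t)%N) (t8_leB : (8 * t <= B)%N).
Hypotheses (mean_tilt_le1 : p * a + (1 - p) * a^-1 <= 1)
  (mean_tilt_expB : (p * a + (1 - p) * a^-1) ^+ B <= 2^-1 ^+ 8).

Definition level_bound (m : nat) : R := 2^-1 ^+ (8 * t ^ m).

Lemma level_bound_step m N :
  (8 * t <= N)%N -> 2 ^+ N * level_bound m ^+ N./2 <= level_bound m.+1.
Proof.
move=> t8N; rewrite /level_bound -exprM.
set e := (8 * t ^ m * N./2)%N.
have le_e : (8 * t ^ m.+1 + N <= e)%N.
  have tm_gt0 : (0 < t ^ m)%N by rewrite expn_gt0 t_gt0.
  have h_ge : (4 * t <= N./2)%N by rewrite geq_half_double -mul2n; lia.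
  have h_le : (N <= 2 * N./2 + 1)%N by rewrite addn1 mul2n -leq_half_double.
  rewrite /e expnSr; move: (t ^ m)%N tm_gt0 (N./2) h_ge h_le => k k_gt0 h h_ge h_le.
  by nia.
rewrite -(subnK (leq_trans (leq_addl _ _) le_e)) exprD mulrCA -exprMn mulfV ?pnatr_eq0 //.
by rewrite expr1n mulr1 ler_wiXn2l //; [lra | lra | lia].
Qed.

Lemma mean_bound_faulty_bound m c :
  (depth c + m.+2 <= D)%N -> mean_bound (faulty_bound m c) (descendant c) (level_bound m).
Proof.
have mean_tilt_ge0 : 0 <= p * a + (1 - p) * a^-1.
  by rewrite -[a^-1]/(tilt false) -[a]/(tilt true) addr_ge0 ?mulr_ge0 ?tilt_ge0 ?subr_ge0.
elim: m c => [|m IH] c Hc.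
  have B_le : (B <= size (children c))%N by apply: size_children; lia.
  apply: (mean_bound_weaken p_ge0 p_le1 _ _ (mean_bound_prod p_ge0 p_le1
    (F := fun d s => tilt (s d)) (A := pred1) (q := p * a + (1 - p) * a^-1) _ _ _ _ _ _)).
  - by move=> i /hasP[d]; rewrite mem_children => Hcd /eqP ->; apply: descendant_child.
  - rewrite /level_bound expn0 muln1; apply: le_trans mean_tilt_expB.
    by rewrite ler_wiXn2l.
  - exact: mean_tilt_ge0.
  - exact: uniq_children.
  - by move=> d s; apply: tilt_ge0.
  - by move=> d s s' ss'; rewrite ss' ?inE.
  - by move=> j j' _ _ i /eqP -> /eqP.
  - by move=> d _; apply: mean_bound_coord.
have N_ge : (8 * t <= size (children c))%N.
  by apply: leq_trans t8_leB (size_children _); lia.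
have card_children : #|[set d in children c]| = size (children c).
  by rewrite cardsE; apply/card_uniqP/uniq_children.
have level_ge0 : 0 <= level_bound m by apply: exprn_ge0; lra.
apply: (mean_bound_weaken p_ge0 p_le1 (A := descendant c) _ _ (mean_bound_sum
  (P := fun T => (T \in powerset [set d in children c]) && (size (children c) <= (#|T|).*2)%N)
  (F := fun T s => \prod_(d <- enum T) faulty_bound m d s)
  (q := fun T => level_bound m ^+ #|T|) _)) => //.
  rewrite -card_children; apply: le_trans (sum_large_subsets _ _) _.
    by rewrite level_ge0 exprn_ile1 //; lra.
  by rewrite card_children level_bound_step.
move=> T /andP[T_sub _].
have T_children d : d \in enum T -> child c d.
  rewrite mem_enum => dT; move: T_sub; rewrite powersetE => /subsetP/(_ d dT).
  by rewrite inE mem_children.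
apply: (mean_bound_weaken p_ge0 p_le1 _ _ (mean_bound_prod p_ge0 p_le1 (r := enum T)
  (F := faulty_bound m) (A := @descendant D B) (q := level_bound m) _ _ _ _ _ _)).
- by move=> i /hasP[d /T_children Hcd]; apply: descendant_trans_child.
- by rewrite cardE.
- exact: level_ge0.
- exact: enum_uniq.
- by move=> d s; apply: faulty_bound_ge0.
- exact: faulty_bound_depends.
- move=> d d' /T_children Hcd /T_children Hcd' i.
  exact: descendant_children_disjoint Hcd Hcd'.
- by move=> d /T_children Hcd; apply: IH; rewrite (child_depth Hcd) addSnnS.
Qed.

End LevelBound.

End FaultyBound.

Lemma mean_tilt_le (delta p : R) : 0 < delta <= 1 -> 0 <= p <= (1 - delta) / 2 ->
  p * (1 + delta) + (1 - p) * (1 + delta)^-1 <= 1 - delta ^+ 2 / 2.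
Proof.
move=> /andP[d_gt0 d_le1] /andP[p_ge0 p_le]; have a_gt0 : 0 < 1 + delta by lra.
have -> : p * (1 + delta) + (1 - p) * (1 + delta)^-1 =
          (p * (1 + delta) ^+ 2 + (1 - p)) / (1 + delta) by field; rewrite gt_eqF.
by rewrite ler_pdivrMr //; nra.
Qed.

Lemma one_sub_expn_le (y : R) (n : nat) : 0 <= y <= 1 -> (1 - y) ^+ n * (1 + n%:R * y) <= 1.
Proof.
move=> /andP[y_ge0 y_le1]; elim: n => [|n IH]; first by rewrite expr0 mul0r addr0 mulr1.
apply: le_trans IH; rewrite exprSr -mulrA ler_wpM2l ?exprn_ge0 ?subr_ge0 //.
by rewrite -natr1; have := ler0n R n; nra.
Qed.

Lemma one_sub_sqr_half_expn_le (delta : R) (B : nat) : 0 < delta <= 1 ->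
  1024 <= B%:R * delta ^+ 2 -> (1 - delta ^+ 2 / 2) ^+ B <= 2^-1 ^+ 8.
Proof.
move=> /andP[d_gt0 d_le1] Bd; have dd_ge0 : 0 <= delta ^+ 2 by apply: exprn_ge0; lra.
have dd_le1 : delta ^+ 2 <= 1 by apply: exprn_ile1; lra.
have := @one_sub_expn_le (delta ^+ 2 / 2) B; rewrite mulrA.
have : 0 <= (1 - delta ^+ 2 / 2) ^+ B by apply: exprn_ge0; lra.
move: ((1 - delta ^+ 2 / 2) ^+ B) => x x_ge0 /(_ _) x_le.
have {}x_le : x * (1 + B%:R * delta ^+ 2 / 2) <= 1 by apply: x_le; lra.
have -> : (2^-1 : R) ^+ 8 = 256^-1 by rewrite exprVn; congr _^-1; rewrite !exprS expr0; lra.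
by rewrite -div1r ler_pdivlMr; nra.
Qed.

Lemma mean_tilt_bounds (delta p : R) (B : nat) :
  0 < delta <= 1 -> 0 <= p <= (1 - delta) / 2 -> 1024 <= B%:R * delta ^+ 2 ->
  p * (1 + delta) + (1 - p) * (1 + delta)^-1 <= 1 /\
  (p * (1 + delta) + (1 - p) * (1 + delta)^-1) ^+ B <= 2^-1 ^+ 8.
Proof.
move=> delta01 p_bounds Bdd; have := mean_tilt_le delta01 p_bounds.
have [[d_gt0 d_le1] [p_ge0 p_le]] := (andP delta01, andP p_bounds).
have q_ge0 : 0 <= p * (1 + delta) + (1 - p) * (1 + delta)^-1.
  by rewrite addr_ge0 ?mulr_ge0 ?invr_ge0 //; lra.
move: (p * _ + _) q_ge0 => q q_ge0 q_le.
have dd_ge0 : 0 <= delta ^+ 2 by apply: exprn_ge0; lra.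
split; first lra.
apply: le_trans (one_sub_sqr_half_expn_le delta01 Bdd).
by rewrite lerXn2r ?nnegrE //; lra.
Qed.

Lemma level_bound_le_powR (B D t : nat) : (4 <= D)%N -> (0 < t)%N -> (B <= t * t)%N ->
  (2^-1 : R) ^+ (8 * t ^ (D - 2)) <= powR 2 (- powR B%:R (1/4 * D%:R)).
Proof.
move=> D_ge4 t_gt0 B_le; set n := (8 * t ^ (D - 2))%N.
have -> : (2^-1 : R) ^+ n = powR 2 (- n%:R) by rewrite powR_invn ?exprVn //; lra.
apply: ler_powR; first lra.
rewrite lerN2.
have t_ge1 : (1 : R) <= t%:R by rewrite ler1n.
apply: (@le_trans _ _ (powR (t%:R ^+ 2) (1/4 * D%:R))).
  apply: ge0_ler_powR; rewrite ?nnegrE ?mulr_ge0 ?exprn_ge0 //; try lra.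
  by rewrite -natrX ler_nat expnS expn1.
rewrite -powR_mulrn -?powRrM; last lra.
apply: (@le_trans _ _ (powR t%:R (D - 2)%N%:R)).
  apply: ler_powR => //; rewrite natrB; last lia.
  have : (4 : R) <= D%:R by rewrite ler_nat.
  lra.
rewrite powR_mulrn /n ?natrM ?natrX; last lra.
by have := exprn_ge0 (D - 2) (le_trans ler01 t_ge1); lra.
Qed.

Lemma divn8_bounds (B : nat) : (1024 <= B)%N ->
  [/\ 0 < B %/ 8, 8 * (B %/ 8) <= B & B <= B %/ 8 * (B %/ 8)]%N.
Proof.
move=> B_ge; have := divn_eq B 8; have := ltn_pmod B (isT : (0 < 8)%N).
move: (B %/ 8)%N (B %% 8)%N => k r r_lt8 Bkr.
have k_ge : (128 <= k)%N by lia.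
have : (9 * k <= k * k)%N by rewrite leq_mul2r (leq_trans _ k_ge) ?orbT.
by split; lia.
Qed.

Theorem claim8p2 :
  exists (C c : Rdefinitions.R) (D0 : nat), 0 < C /\ 0 < c /\
  forall (delta p : Rdefinitions.R) (B D : nat),
    0 < delta <= 1 ->
    0 <= p <= (1 - delta) / 2 ->
    C / delta ^+ 2 <= B%:R ->
    (2 <= D)%N -> (D0 <= D)%N ->
    error_prob D B p <= powR 2 (- powR B%:R (c * D%:R)).
Proof.
exists 1024, (1/4), 4%N; split; first lra; split; first lra.
move=> delta p B D delta01 p_bounds B_ge D_ge2 D_ge4.
have [[d_gt0 d_le1] [p_ge0 p_le]] := (andP delta01, andP p_bounds).
have p_le1 : p <= 1 by lra.
have dd_le1 : delta ^+ 2 <= 1 by apply: exprn_ile1; lra.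
have Bdd : 1024 <= B%:R * delta ^+ 2 by rewrite -ler_pdivrMr ?exprn_gt0.
have B_ge1024 : (1024 <= B)%N by rewrite -(ler_nat R); have := ler0n R B; nra.
have [t_gt0 t8_le B_le] := divn8_bounds B_ge1024.
have [mean_le1 mean_expB] := mean_tilt_bounds delta01 p_bounds Bdd.
have a_ge1 : 1 <= 1 + delta by lra.
have D_gt0 : (0 < D)%N := ltnW D_ge2.
pose root : node D B := existT _ (Ordinal D_gt0) [tuple].
have root_bound := mean_bound_faulty_bound p_ge0 p_le1 a_ge1 t_gt0 t8_le mean_le1 mean_expB
  (m := (D - 2)%N) (c := root).
apply: le_trans (error_prob_le_faulty_bound p_ge0 p_le1 a_ge1 (r := root) erefl D_ge2) _.
apply: le_trans (mean_bound_expect p_ge0 p_le1 (root_bound _)) _.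
  by rewrite add0n -addn2 subnK.
exact: level_bound_le_powR.
Qed.
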